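(* Let $T$ be the weighted shift $Te_n=a_ne_{n+1}$ with a bounded sequence of nonzero weights. Then $\mathcal A_T$ is a (non-unital) integral domain: if $R,S\in\mathcal A_T$ are nonzero, then $RS\ne0$. Consequently, if $T$ is moreover quasinilpotent, every nonzero element of $\mathcal A_T$ is quasinilpotent but not nilpotent.
   Context: $H$ is a complex Hilbert space with orthonormal basis $\{e_n\}_{n\ge0}$, $(a_n)_{n\ge0}$ is a bounded sequence of nonzero complex numbers, $Te_n=a_ne_{n+1}$, and $\mathcal A_T$ is the operator-norm closure in $\mathcal B(H)$ of the polynomials $p(T)$ with $p(0)=0$. *)

From HB Require Import structures.
From mathcomp Require Import all_boot all_order all_algebra.
From mathcomp Require Import all_classical all_reals all_analysis.
From mathcomp Require Import complex.
Set Implicit Arguments. Unset Strict Implicit. Unset Printing Implicit Defensive.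
Import Order.TTheory GRing.Theory Num.Theory numFieldNormedType.Exports.
Local Open Scope ring_scope.

(* H is modelled as l^2(N, C): e_n is the n-th coordinate vector. *)
Section L2.
Variable R : realType.
Local Notation C := (R[i]).

Definition sqmod (z : C) : R := (complex.Re z) ^+ 2 + (complex.Im z) ^+ 2.

Definition vec := nat -> C.

Definition l2 (x : vec) : Prop := cvgn (series (fun n => sqmod (x n) : R)).

Definition l2norm (x : vec) : R := Num.sqrt (limn (series (fun n => sqmod (x n) : R))).

Definition vsub (x y : vec) : vec := fun n => x n - y n.

(* operators are maps on sequences; only their action on l2 is relevant *)
Definition op := vec -> vec.

Definition bounded_op (A : op) : Prop :=
  [/\ forall x, l2 x -> l2 (A x),
      forall (c : C) x y, l2 x -> l2 y ->
        A (fun n => c * x n + y n) = (fun n => c * A x n + A y n)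
    & exists M : R, forall x, l2 x -> l2norm (A x) <= M * l2norm x].

Definition op_zero (A : op) : Prop := forall x, l2 x -> A x = (fun _ => 0).

Definition op_mul (A B : op) : op := fun x => A (B x).

Definition op_invertible (A : op) : Prop :=
  exists B : op, bounded_op B /\
    forall x, l2 x -> B (A x) = x /\ A (B x) = x.

(* sigma(A) = {0}  (spectrum is nonempty in B(H)) ; i.e. lambda - A is
   invertible for every lambda <> 0 *)
Definition quasinilpotent (A : op) : Prop :=
  forall lam : C, lam != 0 -> op_invertible (fun x n => lam * x n - A x n).

Definition nilpotent (A : op) : Prop :=
  exists k : nat, op_zero (fun x => iter k.+1 A x).

Definition wshift (a : nat -> C) : op :=
  fun x n => if n is m.+1 then a m * x m else 0.

Definition poly_op (A : op) (p : {poly C}) : op :=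
  fun x n => \sum_(i < size p) p`_i * iter i A x n.

Definition in_AT (T : op) (A : op) : Prop :=
  bounded_op A /\
  forall eps : R, 0 < eps -> exists p : {poly C}, p.[0] = 0 /\
    forall x, l2 x -> l2norm (vsub (A x) (poly_op T p x)) <= eps * l2norm x.

End L2.

(* Every S in A_T is a limit of polynomials p(T) with p(0) = 0, and the matrix
   entries of p(T) are <e_(n+k), p(T) e_n> = p_k a_n ... a_(n+k-1).  Passing to the
   limit entrywise, S is strictly lower triangular and S e_n = sum_k c_k T^k e_n with
   coefficients c_k independent of n: S is a formal power series in T without
   constant term.  The index of the first nonzero coordinate is therefore additive,
   v(S y) = v(y) + v(S), so A_T has no zero divisors and no nonzero nilpotents.
   If T is quasinilpotent, the resolvent (mu - T)^-1 e_n bounds the weight products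
   a_n ... a_(n+k-1) by K mu^(k+1) for every mu > 0.  Writing S = p(T) + E with
   p = X q and ||E|| <= |lam|/4, the binomial expansion of (p(T) + E)^r, valid because
   all terms are commuting power series in T, gives ||S^r|| <= C rho^r with
   2 rho <= |lam|, so the Neumann series sum_r S^r / lam^(r+1) inverts lam - S. *)

From HB Require Import structures.
From mathcomp Require Import all_boot all_order all_algebra.
From mathcomp Require Import all_classical all_reals all_analysis.
From mathcomp Require Import complex.
From mathcomp Require Import ring lra zify.
Import Order.TTheory GRing.Theory Num.Theory numFieldNormedType.Exports.
Local Open Scope ring_scope.
Set Implicit Arguments. Unset Strict Implicit.

Section SquaredModulus.
Variable R : realType.
Local Notation C := R[i].
Implicit Types z u v : C.

Lemma sqmod_ge0 z : 0 <= sqmod z.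
Proof. by rewrite /sqmod addr_ge0 // sqr_ge0. Qed.

Lemma sqmod0 : sqmod (0 : C) = 0.
Proof. by rewrite /sqmod /= expr0n /= addr0. Qed.

Lemma sqmod1 : sqmod (1 : C) = 1.
Proof. by rewrite /sqmod /= expr0n /= expr1n addr0. Qed.

Lemma sqmod_eq0 z : (sqmod z == 0) = (z == 0).
Proof.
case: z => p q; rewrite /sqmod /=; apply/eqP/eqP => [h|[-> ->]].
  have hp : p = 0 by nra.
  have hq : q = 0 by nra.
  by rewrite hp hq.
by rewrite expr0n /= addr0.
Qed.

Lemma sqmod_gt0 z : z != 0 -> 0 < sqmod z.
Proof. by move=> nz; rewrite lt_def sqmod_eq0 nz sqmod_ge0. Qed.

Lemma sqmodN z : sqmod (- z) = sqmod z.
Proof. case: z => p q; rewrite /sqmod /=; ring. Qed.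

Lemma sqmodM u v : sqmod (u * v) = sqmod u * sqmod v.
Proof. case: u => p q; case: v => r s; rewrite /sqmod /=; ring. Qed.

Lemma sqmodX z k : sqmod (z ^+ k) = sqmod z ^+ k.
Proof. by elim: k => [|k IH]; rewrite ?sqmod1 // !exprS sqmodM IH. Qed.

Lemma sqmodV z : sqmod z^-1 = (sqmod z)^-1.
Proof.
have [->|nz] := eqVneq z 0; first by rewrite invr0 sqmod0 invr0.
have nz' : sqmod z != 0 by rewrite sqmod_eq0.
by apply: (mulfI nz'); rewrite -sqmodM !divff // sqmod1.
Qed.

Lemma sqmod_natr n : sqmod (n%:R : C) = n%:R ^+ 2.
Proof.
have -> : (n%:R : C) = Complex n%:R 0.
  by elim: n => [|n IH] //; apply/eqP; rewrite -addn1 !natrD IH eq_complex /= addr0 !eqxx.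
by rewrite /sqmod /= expr0n /= addr0.
Qed.

Lemma sqmodD_le2 u v : sqmod (u + v) <= 2 * (sqmod u + sqmod v).
Proof.
case: u => p q; case: v => r s; rewrite /sqmod /=.
have h1 : 0 <= (p - r) ^+ 2 by exact: sqr_ge0.
have h2 : 0 <= (q - s) ^+ 2 by exact: sqr_ge0.
nra.
Qed.

(* Summed over the coordinates of x + y with a = ||x||, b = ||y||: Minkowski's inequality. *)
Lemma sqmodD_weighted (a b : R) u v :
  a * b * sqmod (u + v) <= (a + b) * (b * sqmod u + a * sqmod v).
Proof.
case: u => p q; case: v => r s; rewrite /sqmod /=.
have h1 : 0 <= (b * p - a * r) ^+ 2 by exact: sqr_ge0.
have h2 : 0 <= (b * q - a * s) ^+ 2 by exact: sqr_ge0.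
nra.
Qed.

Definition cabs z : R := Num.sqrt (sqmod z).

Lemma cabs_ge0 z : 0 <= cabs z.
Proof. exact: sqrtr_ge0. Qed.

Lemma cabs_gt0 z : z != 0 -> 0 < cabs z.
Proof. by move=> nz; rewrite sqrtr_gt0 sqmod_gt0. Qed.

Lemma sqr_cabs z : cabs z ^+ 2 = sqmod z.
Proof. by rewrite sqr_sqrtr // sqmod_ge0. Qed.

Lemma cabsM u v : cabs (u * v) = cabs u * cabs v.
Proof. by rewrite /cabs sqmodM sqrtrM // sqmod_ge0. Qed.

Lemma cabsX z k : cabs (z ^+ k) = cabs z ^+ k.
Proof.
elim: k => [|k IH]; first by rewrite !expr0 /cabs sqmod1 sqrtr1.
by rewrite !exprS cabsM IH.
Qed.

Lemma cabsV z : cabs z^-1 = (cabs z)^-1.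
Proof. by rewrite /cabs sqmodV sqrtrV // sqmod_ge0. Qed.

Lemma cabs_natr n : cabs (n%:R : C) = n%:R.
Proof. by rewrite /cabs sqmod_natr sqrtr_sqr ger0_norm. Qed.

Lemma sqmod_small_eq0 z (K : R) : 0 <= K ->
  (forall e : R, 0 < e -> sqmod z <= e ^+ 2 * K) -> z = 0.
Proof.
move=> K0 H; apply/eqP; rewrite -sqmod_eq0 eq_le sqmod_ge0 andbT.
rewrite leNgt; apply/negP => s0; set s := sqmod z in s0 H.
have K1 : 0 < 2 * (K + 1) by rewrite mulr_gt0 // ltr_pwDr.
set t := s / (2 * (K + 1)).
have t0 : 0 < t by rewrite divr_gt0.
have st : s <= t * K by have := H (Num.sqrt t); rewrite sqrtr_gt0 sqr_sqrtr ?(ltW t0) //; apply.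
have ht : t * (2 * (K + 1)) = s by rewrite /t divfK // gt_eqF.
have tK : 0 <= t * K by rewrite mulr_ge0 // ltW.
clearbody t s; nra.
Qed.

End SquaredModulus.

Section L2Space.
Variable R : realType.
Local Notation C := R[i].
Implicit Types (x y : vec R) (c : C).

Definition sqsum x N : R := \sum_(k < N) sqmod (x k).

Lemma sqsum_nondecreasing x : nondecreasing_seq (sqsum x).
Proof. by apply/nondecreasing_seqP => n; rewrite /sqsum big_ord_recr /= lerDl sqmod_ge0. Qed.

Lemma series_sqmodE x : series (fun n => sqmod (x n)) = sqsum x.
Proof. by rewrite seriesEord. Qed.

Lemma sqsum_le_lim x N : l2 x -> sqsum x N <= limn (sqsum x).
Proof.
by rewrite /l2 series_sqmodE => cx; exact: nondecreasing_cvgn_le (sqsum_nondecreasing x) cx N.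
Qed.

Lemma l2norm_ge0 x : 0 <= l2norm x.
Proof. exact: sqrtr_ge0. Qed.

Lemma sqr_l2norm x : l2 x -> l2norm x ^+ 2 = limn (sqsum x).
Proof.
move=> hx; rewrite /l2norm series_sqmodE sqr_sqrtr //.
by apply: le_trans (sqsum_le_lim 0 hx); rewrite /sqsum big_ord0.
Qed.

Lemma sqsum_le_l2norm x N : l2 x -> sqsum x N <= l2norm x ^+ 2.
Proof. by move=> hx; rewrite sqr_l2norm //; exact: sqsum_le_lim. Qed.

Lemma sqmod_le_l2norm x m : l2 x -> sqmod (x m) <= l2norm x ^+ 2.
Proof.
move=> hx; apply: le_trans (sqsum_le_l2norm m.+1 hx).
by rewrite /sqsum big_ord_recr /= lerDr sumr_ge0 // => i _; exact: sqmod_ge0.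
Qed.

Lemma l2_sqsum_le x (K : R) : 0 <= K -> (forall N, sqsum x N <= K ^+ 2) ->
  l2 x /\ l2norm x <= K.
Proof.
move=> K0 hK.
have cx : cvgn (sqsum x).
  by apply: nondecreasing_is_cvgn (sqsum_nondecreasing x) _; exists (K ^+ 2) => _ [n _ <-].
have hx : l2 x by rewrite /l2 series_sqmodE.
split => //; rewrite -(ger0_norm K0) -sqrtr_sqr /l2norm series_sqmodE ler_sqrt ?sqr_ge0 //.
by apply: limr_le => //; near=> n; exact: hK.
Unshelve. all: by end_near.
Qed.

Lemma l2norm_le0 x m : l2 x -> l2norm x <= 0 -> x m = 0.
Proof.
move=> hx h0; apply/eqP; rewrite -sqmod_eq0 eq_le sqmod_ge0 andbT.
have nx0 : l2norm x = 0 by apply/eqP; rewrite eq_le h0 l2norm_ge0.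
have -> : 0 = l2norm x ^+ 2 :> R by rewrite nx0 expr0n.
exact: sqmod_le_l2norm.
Qed.

Definition vscale c x : vec R := fun m => c * x m.
Definition vadd x y : vec R := fun m => x m + y m.
Definition vsum (F : nat -> vec R) n : vec R := fun m => \sum_(r < n) F r m.
Definition evec n : vec R := fun k => (k == n)%:R.

Lemma l2_scale c x : l2 x -> l2 (vscale c x) /\ l2norm (vscale c x) <= cabs c * l2norm x.
Proof.
move=> hx; apply: l2_sqsum_le; first by rewrite mulr_ge0 ?cabs_ge0 ?l2norm_ge0.
move=> N; rewrite exprMn sqr_cabs /sqsum /vscale.
under eq_bigr do rewrite sqmodM.
by rewrite -mulr_sumr ler_wpM2l ?sqmod_ge0 ?sqsum_le_l2norm.
Qed.

Lemma l2_add x y : l2 x -> l2 y -> l2 (vadd x y) /\ l2norm (vadd x y) <= l2norm x + l2norm y.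
Proof.
move=> hx hy.
have [a0|a_neq0] := eqVneq (l2norm x) 0.
  have -> : vadd x y = y by apply: funext => m; rewrite /vadd (l2norm_le0 m hx) ?a0 ?add0r.
  by rewrite a0 add0r.
have [b0|b_neq0] := eqVneq (l2norm y) 0.
  have -> : vadd x y = x by apply: funext => m; rewrite /vadd (l2norm_le0 m hy) ?b0 ?addr0.
  by rewrite b0 addr0.
set a := l2norm x in a_neq0 *; set b := l2norm y in b_neq0 *.
have a_gt0 : 0 < a by rewrite lt_def a_neq0 l2norm_ge0.
have b_gt0 : 0 < b by rewrite lt_def b_neq0 l2norm_ge0.
apply: l2_sqsum_le; first by rewrite addr_ge0 ?l2norm_ge0.
move=> N; rewrite -(ler_pM2l (mulr_gt0 a_gt0 b_gt0)).
have hxy : a * b * sqsum (vadd x y) N <= (a + b) * (b * sqsum x N + a * sqsum y N).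
  rewrite /sqsum !mulr_sumr -big_split mulr_sumr /=.
  by apply: ler_sum => i _; exact: sqmodD_weighted.
apply: (le_trans hxy).
rewrite (_ : a * b * (a + b) ^+ 2 = (a + b) * (b * a ^+ 2 + a * b ^+ 2)); last by ring.
apply: ler_wpM2l; first by rewrite addr_ge0 // ltW.
by apply: lerD; apply: ler_wpM2l; rewrite ?sqsum_le_l2norm // ltW.
Qed.

Lemma l2_vsub x y : l2 x -> l2 y -> l2 (vsub x y).
Proof.
move=> hx hy; have [+ _] := l2_add hx (l2_scale (-1) hy).1.
by congr l2; apply: funext => m; rewrite /vsub /vadd /vscale mulN1r.
Qed.

Definition valuation x j := (forall k, (k < j)%N -> x k = 0) /\ x j != 0.

Lemma valuation_exists x : (exists k, x k != 0) -> exists j, valuation x j.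
Proof.
move=> nx0; case: (ex_minnP nx0) => j xj0 min_j; exists j; split => // k lt_kj.
by apply/eqP; apply: contraTT lt_kj => /min_j; rewrite -leqNgt.
Qed.

Lemma valuation_evec n : valuation (evec n) n.
Proof. by split => [k lt_kn|]; rewrite /evec ?(ltn_eqF lt_kn) // eqxx oner_neq0. Qed.

Lemma l2_0 : l2 (fun _ => 0 : C).
Proof.
suff [] : l2 (fun _ => 0 : C) /\ l2norm (fun _ => 0 : C) <= 0 by [].
by apply: l2_sqsum_le => // N; rewrite /sqsum big1 ?expr0n // => i _; exact: sqmod0.
Qed.

Lemma l2_vsum (F : nat -> vec R) n : (forall r, (r < n)%N -> l2 (F r)) ->
  l2 (vsum F n) /\ l2norm (vsum F n) <= \sum_(r < n) l2norm (F r).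
Proof.
elim: n => [|n IH] hF.
  by rewrite big_ord0; apply: l2_sqsum_le => // N; rewrite expr0n /sqsum big1 // => i _;
    rewrite /vsum big_ord0 sqmod0.
have [hl hn] := IH (fun r hr => hF r (ltnW hr)).
have -> : vsum F n.+1 = vadd (vsum F n) (F n).
  by apply: funext => m; rewrite /vsum /vadd big_ord_recr.
have [hl' hn'] := l2_add hl (hF n (ltnSn n)); split => //.
by rewrite big_ord_recr /= (le_trans hn') // lerD2r.
Qed.

Lemma l2_lincomb (c : nat -> C) (F : nat -> vec R) N : (forall r, (r < N)%N -> l2 (F r)) ->
  l2 (fun m => \sum_(r < N) c r * F r m).
Proof.
move=> hF; have [] // := @l2_vsum (fun r => vscale (c r) (F r)) N.
by move=> r lt_rN; exact: (l2_scale (c r) (hF r lt_rN)).1.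
Qed.

Lemma l2_evec n : l2 (evec n) /\ l2norm (evec n) <= 1.
Proof.
apply: l2_sqsum_le => // N; rewrite expr1n.
elim: N => [|N IH]; first by rewrite /sqsum big_ord0.
rewrite /sqsum big_ord_recr /= -/(sqsum _ N) /evec.
case: eqVneq => [eNn|_]; last by rewrite sqmod0 addr0.
rewrite sqmod1 /sqsum big1 ?add0r // => i _.
by rewrite -eNn eqn_leq [(N <= i)%N]leqNgt ltn_ord andbF sqmod0.
Qed.

End L2Space.

Arguments evec {R} n.
Arguments l2_evec {R} n.
Arguments valuation_evec {R} n.

Section WeightedShift.
Variable R : realType.
Local Notation C := R[i].
Variable a : nat -> C.
Local Notation T := (wshift a).
Implicit Types (x y : vec R) (p q : {poly C}).

Definition wprod n k : C := \prod_(t < k) a (n + t).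

Lemma wprod0 n : wprod n 0 = 1.
Proof. by rewrite /wprod big_ord0. Qed.

Lemma wprodS n k : wprod n k.+1 = wprod n k * a (n + k).
Proof. by rewrite /wprod big_ord_recr. Qed.

Lemma iter_wshift_lt i x m : (m < i)%N -> iter i T x m = 0.
Proof. by elim: i m => [|i IH] [|m] //= lt_mi; rewrite /wshift IH ?mulr0. Qed.

Lemma iter_wshift_addn i x m : iter i T x (m + i)%N = wprod m i * x m.
Proof.
elim: i m => [|i IH] m; first by rewrite /= addn0 wprod0 mul1r.
by rewrite /= addnS /wshift IH wprodS mulrA [a _ * _]mulrC.
Qed.

(* The matrix of p(T): lower triangular with entries p_(m-j) wprod j (m-j). *)
Definition wpoly p x : vec R :=
  fun m => \sum_(j < m.+1) x j * p`_(m - j) * wprod j (m - j).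

Lemma wpoly0 x m : wpoly 0 x m = 0.
Proof. by rewrite /wpoly big1 // => j _; rewrite coef0 mulr0 mul0r. Qed.

Lemma wpolyD p q x m : wpoly (p + q) x m = wpoly p x m + wpoly q x m.
Proof. by rewrite /wpoly -big_split; apply: eq_bigr => j _; rewrite coefD mulrDr mulrDl. Qed.

Lemma wpolyB p q x m : wpoly (p - q) x m = wpoly p x m - wpoly q x m.
Proof. by rewrite /wpoly -sumrB; apply: eq_bigr => j _; rewrite coefB mulrBr mulrBl. Qed.

Lemma wpolyZ c p x m : wpoly (c *: p) x m = c * wpoly p x m.
Proof. by rewrite /wpoly mulr_sumr; apply: eq_bigr => j _; rewrite coefZ mulrCA !mulrA. Qed.

Lemma wpoly_sum I (r : seq I) (P : pred I) (F : I -> {poly C}) x m :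
  wpoly (\sum_(i <- r | P i) F i) x m = \sum_(i <- r | P i) wpoly (F i) x m.
Proof. exact: (big_morph _ (fun p q => wpolyD p q x m) (wpoly0 x m)). Qed.

Lemma wpolyMn p k x m : wpoly (p *+ k) x m = wpoly p x m *+ k.
Proof. by elim: k => [|k IH]; rewrite ?mulr0n ?wpoly0 // !mulrS wpolyD IH. Qed.

Lemma wpoly1 x : wpoly 1 x = x.
Proof.
apply: funext => m; rewrite /wpoly big_ord_recr /= subnn coef1 wprod0 !mulr1.
rewrite big1 ?add0r // => j _.
by rewrite coef1 subn_eq0 leqNgt ltn_ord mulr0 mul0r.
Qed.

Lemma wpolyXM p x : wpoly ('X * p) x = T (wpoly p x).
Proof.
apply: funext => -[|m].
  by rewrite /wpoly /wshift big_ord_recr big_ord0 /= coefXM mulr0 mul0r add0r.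
rewrite /wpoly /wshift big_ord_recr /= subnn coefXM eqxx mulr0 mul0r addr0.
rewrite mulr_sumr; apply: eq_bigr => j _.
have le_jm : (j <= m)%N by rewrite -ltnS ltn_ord.
by rewrite subSn // coefXM /= wprodS subnKC //; ring.
Qed.

Lemma wpolyXnM i p x : wpoly ('X^i * p) x = iter i T (wpoly p x).
Proof.
elim: i => [|i IH]; first by rewrite expr0 mul1r.
by rewrite exprS -mulrA wpolyXM IH.
Qed.

Lemma wpolyE p x : wpoly p x = poly_op T p x.
Proof.
apply: funext => m; rewrite /poly_op -{1}(coefK p) poly_def wpoly_sum.
by apply: eq_bigr => i _; rewrite wpolyZ -(mulr1 'X^i) wpolyXnM wpoly1.
Qed.

Lemma wpolyM p q x : wpoly (p * q) x = wpoly p (wpoly q x).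
Proof.
apply: funext => m; rewrite [in RHS]wpolyE /poly_op -{1}(coefK p) poly_def mulr_suml wpoly_sum.
by apply: eq_bigr => i _; rewrite -scalerAl wpolyZ wpolyXnM.
Qed.

Lemma wpolyX p k x : wpoly (p ^+ k) x = iter k (wpoly p) x.
Proof. by elim: k => [|k IH]; rewrite ?expr0 ?wpoly1 // exprS wpolyM IH. Qed.

Lemma wpoly_causal p x y m : (forall j, (j <= m)%N -> x j = y j) ->
  wpoly p x m = wpoly p y m.
Proof. by move=> exy; apply: eq_bigr => j _; rewrite exy // -ltnS. Qed.

Lemma iter_wpoly_causal p k x y m : (forall j, (j <= m)%N -> x j = y j) ->
  iter k (wpoly p) x m = iter k (wpoly p) y m.
Proof.
elim: k m => [|k IH] m exy /=; first exact: exy.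
by apply: wpoly_causal => j le_jm; apply: IH => i le_ij; apply: exy (leq_trans le_ij le_jm).
Qed.

Lemma wpoly_evec p n k : wpoly p (evec n) (n + k)%N = p`_k * wprod n k.
Proof.
have lt_n : (n < (n + k).+1)%N by rewrite ltnS leq_addr.
rewrite /wpoly (bigD1 (Ordinal lt_n)) //= /evec eqxx mul1r addKn big1 ?addr0 // => j nj.
have -> : (j == n :> nat) = false by apply: contraNF nj => /eqP ejn; apply/eqP/val_inj.
by rewrite !mul0r.
Qed.

Lemma wpoly_vanish p x j : p`_0 = 0 -> (forall k, (k < j)%N -> x k = 0) -> wpoly p x j = 0.
Proof.
move=> p0 xj; rewrite /wpoly big_ord_recr /= subnn p0 mulr0 mul0r addr0.
by rewrite big1 // => k _; rewrite xj ?mul0r.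
Qed.

Lemma l2_iter_wshift i x (V : R) : l2 x -> 0 <= V -> (forall m, sqmod (wprod m i) <= V) ->
  l2 (iter i T x) /\ l2norm (iter i T x) <= Num.sqrt V * l2norm x.
Proof.
move=> hx V0 hV; apply: l2_sqsum_le; first by rewrite mulr_ge0 ?sqrtr_ge0 ?l2norm_ge0.
have sqsum_le N : sqsum (iter i T x) N <= V * sqsum x (N - i).
  elim: N => [|N IH]; first by rewrite /sqsum !big_ord0 mulr0.
  rewrite /sqsum big_ord_recr /= -/(sqsum _ N).
  have [lt_Ni|le_iN] := ltnP N i.
    by rewrite iter_wshift_lt // sqmod0 addr0 (_ : N.+1 - i = N - i)%N //; lia.
  rewrite subSn // /sqsum big_ord_recr /= -/(sqsum x (N - i)) mulrDr lerD //.
  by rewrite -{1}(subnK le_iN) iter_wshift_addn sqmodM ler_wpM2r ?sqmod_ge0.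
move=> N; rewrite exprMn sqr_sqrtr //; apply: le_trans (sqsum_le N) _.
by rewrite ler_wpM2l ?sqsum_le_l2norm.
Qed.

Section BoundedWeights.
Variable M : R.
Hypothesis sqmod_a_le : forall n, sqmod (a n) <= M.

Lemma sqmod_bound_ge0 : 0 <= M.
Proof. exact: le_trans (sqmod_ge0 _) (sqmod_a_le 0). Qed.

Lemma sqmod_wprod_le m i : sqmod (wprod m i) <= M ^+ i.
Proof.
elim: i => [|i IH]; first by rewrite wprod0 sqmod1 expr0.
by rewrite wprodS sqmodM exprSr ler_pM ?sqmod_ge0.
Qed.

(* The triangle inequality bound on ||p(T)||, using ||T^i|| <= sqrt(M)^i. *)
Definition wpoly_bound p : R := \sum_(i < size p) cabs p`_i * Num.sqrt (M ^+ i).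

Lemma wpoly_bound_ge0 p : 0 <= wpoly_bound p.
Proof. by apply: sumr_ge0 => i _; rewrite mulr_ge0 ?cabs_ge0 ?sqrtr_ge0. Qed.

Lemma l2_wpoly p x : l2 x -> l2 (wpoly p x) /\ l2norm (wpoly p x) <= wpoly_bound p * l2norm x.
Proof.
move=> hx.
have -> : wpoly p x = vsum (fun i => vscale p`_i (iter i T x)) (size p) by rewrite wpolyE.
have hT i : l2 (iter i T x) /\ l2norm (iter i T x) <= Num.sqrt (M ^+ i) * l2norm x.
  by apply: l2_iter_wshift; rewrite ?exprn_ge0 ?sqmod_bound_ge0 // => m; exact: sqmod_wprod_le.
have [hl hn] := @l2_vsum _ (fun i => vscale p`_i (iter i T x)) (size p)
  (fun r _ => (l2_scale p`_r (hT r).1).1).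
split => //.
apply: (le_trans hn); rewrite /wpoly_bound mulr_suml; apply: ler_sum => i _.
apply: le_trans (l2_scale p`_i (hT i).1).2 _.
by rewrite -mulrA ler_wpM2l ?cabs_ge0 ?(hT i).2.
Qed.

Lemma l2_iter_wpoly p j x : l2 x ->
  l2 (iter j (wpoly p) x) /\ l2norm (iter j (wpoly p) x) <= wpoly_bound p ^+ j * l2norm x.
Proof.
move=> hx; elim: j => [|j [hl hn]]; first by rewrite expr0 mul1r.
have [hl' hn'] := l2_wpoly p hl; split => //=.
by rewrite (le_trans hn') // exprS -mulrA ler_wpM2l ?wpoly_bound_ge0.
Qed.

End BoundedWeights.
End WeightedShift.

Section PowerSeries.
Variable R : realType.
Local Notation C := R[i].
Variable a : nat -> C.
Hypothesis a_neq0 : forall n, a n != 0.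
Variable M : R.
Hypothesis sqmod_a_le : forall n, sqmod (a n) <= M.
Local Notation T := (wshift a).
Variable S : op R.
Hypothesis S_AT : in_AT T S.
Implicit Types (x y : vec R).

Lemma wprod_neq0 n k : wprod a n k != 0.
Proof. by rewrite /wprod prodf_seq_neq0; apply/allP => i _; exact: a_neq0. Qed.

Lemma in_AT_l2 x : l2 x -> l2 (S x).
Proof. by case: S_AT => -[] + _ _ _; apply. Qed.

Lemma in_AT_iter_l2 r x : l2 x -> l2 (iter r S x).
Proof. by move=> hx; elim: r => [|r IH] //=; exact: in_AT_l2. Qed.

Lemma in_AT_linear c x y : l2 x -> l2 y ->
  S (fun n => c * x n + y n) = (fun n => c * S x n + S y n).
Proof. by case: S_AT => -[_ + _] _; apply. Qed.

Lemma in_AT_approx e : 0 < e -> exists p : {poly C}, p`_0 = 0 /\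
  forall x, l2 x -> forall m, sqmod (S x m - wpoly a p x m) <= e ^+ 2 * l2norm x ^+ 2.
Proof.
move=> e_gt0; case: S_AT => _ /(_ e e_gt0) [p [p0 hp]].
exists p; split => [|x hx m]; first by rewrite -horner_coef0.
have hv : l2 (vsub (S x) (wpoly a p x)).
  by apply: l2_vsub; [exact: in_AT_l2 | exact: (l2_wpoly sqmod_a_le p hx).1].
apply: le_trans (sqmod_le_l2norm m hv) _; rewrite -exprMn lerXn2r ?nnegrE ?l2norm_ge0 //.
  by rewrite mulr_ge0 ?l2norm_ge0 // ltW.
by rewrite wpolyE; exact: hp.
Qed.

Lemma in_AT_vanish x j : l2 x -> (forall k, (k < j)%N -> x k = 0) -> S x j = 0.
Proof.
move=> hx xj; apply: (sqmod_small_eq0 (sqr_ge0 (l2norm x))) => e e_gt0.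
have [p [p0 hp]] := in_AT_approx e_gt0.
by have := hp x hx j; rewrite wpoly_vanish // subr0.
Qed.

Lemma in_AT_iter_lt r x m : l2 x -> (m < r)%N -> iter r S x m = 0.
Proof.
elim: r m => [|r IH] m // hx lt_mr; apply: in_AT_vanish => [|k lt_km].
  exact: in_AT_iter_l2.
by apply: IH => //; rewrite (leq_trans lt_km) // -ltnS.
Qed.

Lemma in_AT_causal x y m : l2 x -> l2 y ->
  (forall j, (j < m)%N -> x j = y j) -> S x m = S y m.
Proof.
move=> hx hy exy; apply/eqP; rewrite -subr_eq0 addrC -mulN1r; apply/eqP.
have hz : l2 (fun n => -1 * y n + x n).
  have [+ _] := l2_add (l2_scale (-1) hy).1 hx; exact.
have := in_AT_vanish hz (j := m); rewrite in_AT_linear // => -> // k lt_km.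
by rewrite exy // mulN1r addNr.
Qed.

Lemma in_AT_sum (c : nat -> C) (F : nat -> vec R) N : (forall r, l2 (F r)) ->
  S (fun n => \sum_(r < N) c r * F r n) = fun n => \sum_(r < N) c r * S (F r) n.
Proof.
move=> hF; elim: N => [|N IH].
  apply: funext => m; rewrite big_ord0; apply: in_AT_vanish => [|k _]; last by rewrite big_ord0.
  by under eq_fun do rewrite big_ord0; exact: l2_0.
have hsum : l2 (fun n => \sum_(r < N) c r * F r n) := l2_lincomb (fun r _ => hF r).
have -> : (fun n => \sum_(r < N.+1) c r * F r n) =
    fun n => c N * F N n + \sum_(r < N) c r * F r n.
  by apply: funext => n; rewrite big_ord_recr /= addrC.
rewrite in_AT_linear // IH; apply: funext => n.
by rewrite [in RHS]big_ord_recr /= addrC.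
Qed.

Lemma in_AT_coordE x m : l2 x -> S x m = \sum_(n < m) x n * S (evec n) m.
Proof.
move=> hx.
have -> : S x m = S (fun k => \sum_(n < m) x n * evec n k) m.
  apply: in_AT_causal => // [|j lt_jm].
    exact: l2_lincomb (fun n _ => (l2_evec n).1).
  rewrite (bigD1 (Ordinal lt_jm)) //= /evec eqxx mulr1 big1 ?addr0 // => n nj.
  have -> : (j == n :> nat) = false by apply: contraNF nj => /eqP ejn; apply/eqP/val_inj.
  by rewrite mulr0.
by rewrite in_AT_sum // => n; exact: (l2_evec n).1.
Qed.

Lemma in_AT_evec_le n m : (m <= n)%N -> S (evec n) m = 0.
Proof.
move=> le_mn; apply: in_AT_vanish (l2_evec n).1 _ => k lt_km.
by rewrite /evec ltn_eqF // (leq_trans lt_km le_mn).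
Qed.

(* Both sides are limits of the same expression p_k wprod 0 k wprod n k, by [wpoly_evec]. *)
Lemma in_AT_evec_cross n k :
  S (evec n) (n + k)%N * wprod a 0 k = S (evec 0) k * wprod a n k.
Proof.
apply/eqP; rewrite -subr_eq0; apply/eqP.
apply: (@sqmod_small_eq0 _ _ (2 * (sqmod (wprod a 0 k) + sqmod (wprod a n k)))).
  by rewrite mulr_ge0 // addr_ge0 ?sqmod_ge0.
move=> e e_gt0; have [p [p0 hp]] := in_AT_approx e_gt0.
have evec_le u : e ^+ 2 * l2norm (evec u) ^+ 2 <= e ^+ 2.
  rewrite -[leRHS]mulr1 ler_wpM2l ?sqr_ge0 // -(expr1n _ 2) lerXn2r ?nnegrE ?l2norm_ge0 //.
  exact: (l2_evec u).2.
have := le_trans (hp _ (l2_evec n).1 (n + k)%N) (evec_le n); rewrite wpoly_evec.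
have := le_trans (hp _ (l2_evec 0).1 k) (evec_le 0%N).
rewrite -[k in wpoly _ _ _ k]add0n wpoly_evec.
set d0 := _ - p`_k * _; set dn := _ - p`_k * _ => h0 hn.
have -> : S (evec n) (n + k)%N * wprod a 0 k - S (evec 0) k * wprod a n k =
    dn * wprod a 0 k + - (d0 * wprod a n k) by rewrite /d0 /dn; ring.
apply: le_trans (sqmodD_le2 _ _) _; rewrite sqmodN !sqmodM.
have f0 : 0 <= (e ^+ 2 - sqmod d0) * sqmod (wprod a n k) by rewrite mulr_ge0 ?subr_ge0 ?sqmod_ge0.
have fn : 0 <= (e ^+ 2 - sqmod dn) * sqmod (wprod a 0 k) by rewrite mulr_ge0 ?subr_ge0 ?sqmod_ge0.
clearbody d0 dn; nra.
Qed.

(* The power series of S in T: S = sum_k AT_coef k T^k. *)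
Definition AT_coef k : C := S (evec 0) k / wprod a 0 k.

Lemma AT_coef0 : AT_coef 0 = 0.
Proof. by rewrite /AT_coef in_AT_evec_le // mul0r. Qed.

Lemma in_AT_evecE n m : (n <= m)%N -> S (evec n) m = AT_coef (m - n) * wprod a n (m - n).
Proof.
move=> le_nm; rewrite /AT_coef mulrAC -in_AT_evec_cross subnKC //.
by rewrite mulfK // wprod_neq0.
Qed.

Definition AT_poly N : {poly C} := \poly_(k < N) AT_coef k.

Lemma in_AT_wpoly x m N : l2 x -> (m < N)%N -> S x m = wpoly a (AT_poly N) x m.
Proof.
move=> hx lt_mN; rewrite /AT_poly in_AT_coordE // /wpoly big_ord_recr /= subnn coef_poly.
rewrite (leq_ltn_trans (leq0n m) lt_mN) AT_coef0 mulr0 mul0r addr0.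
apply: eq_bigr => j _.
rewrite coef_poly (leq_ltn_trans (leq_subr j m) lt_mN) in_AT_evecE ?mulrA //.
exact: ltnW (ltn_ord j).
Qed.

Lemma in_AT_valuation k0 y j : valuation AT_coef k0 -> l2 y -> valuation y j ->
  valuation (S y) (j + k0).
Proof.
move=> [low_k0 ck0] hy [low_j yj].
have term0 m (n : 'I_m) : (n < j)%N || (m < n + k0)%N -> y n * S (evec n) m = 0.
  case/orP => [lt_nj|lt_m]; first by rewrite low_j ?mul0r.
  have le_nm : (n <= m)%N := ltnW (ltn_ord n).
  by rewrite in_AT_evecE // low_k0 ?mul0r ?mulr0 // ltn_subLR.
have k0_gt0 : (0 < k0)%N by rewrite lt0n; apply: contraNneq ck0 => ->; rewrite AT_coef0.
have lt_j : (j < j + k0)%N by rewrite -{1}(addn0 j) ltn_add2l.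
split => [m lt_m|].
  rewrite in_AT_coordE // big1 // => n _; apply: term0.
  by case: ltnP => //= le_jn; rewrite (leq_trans lt_m) // leq_add2r.
rewrite in_AT_coordE // (bigD1 (Ordinal lt_j)) //= big1 ?addr0.
  rewrite in_AT_evecE ?leq_addr // addKn.
  by do 2!apply: mulf_neq0 => //; exact: wprod_neq0.
move=> n; rewrite -val_eqE /= => nj; apply: term0.
by case: ltnP => //= le_jn; rewrite ltn_add2r ltn_neqAle eq_sym nj.
Qed.

Lemma AT_coef_valuation : ~ op_zero S -> exists k0, valuation AT_coef k0.
Proof.
move=> S_neq0; apply: valuation_exists; apply: contrapT => coef0; apply: S_neq0 => x hx.
apply: funext => m; rewrite in_AT_coordE // big1 // => n _.
rewrite in_AT_evecE; last exact: ltnW (ltn_ord n).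
have -> : AT_coef (m - n) = 0.
  by apply/eqP; apply: contrapT => /negP cn; apply: coef0; exists (m - n)%N.
by rewrite !mul0r mulr0.
Qed.

End PowerSeries.

Section IntegralDomain.
Variable R : realType.
Variable a : nat -> R[i].
Hypothesis a_neq0 : forall n, a n != 0.
Variable M : R.
Hypothesis sqmod_a_le : forall n, sqmod (a n) <= M.
Local Notation T := (wshift a).

Lemma in_AT_mul_neq0 S1 S2 : in_AT T S1 -> in_AT T S2 ->
  ~ op_zero S1 -> ~ op_zero S2 -> ~ op_zero (op_mul S1 S2).
Proof.
move=> S1_AT S2_AT /(AT_coef_valuation a_neq0 sqmod_a_le S1_AT) [k1 v1].
move=> /(AT_coef_valuation a_neq0 sqmod_a_le S2_AT) [k2 v2] S12_0.
have e0_l2 : l2 (evec 0 : vec R) := (l2_evec 0).1.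
have v21 := in_AT_valuation a_neq0 sqmod_a_le S2_AT v2 e0_l2 (valuation_evec 0).
have [_] := in_AT_valuation a_neq0 sqmod_a_le S1_AT v1 (in_AT_l2 S2_AT e0_l2) v21.
by rewrite -/(op_mul S1 S2 (evec 0)) S12_0 ?eqxx.
Qed.

Lemma in_AT_not_nilpotent S : in_AT T S -> ~ op_zero S -> ~ nilpotent S.
Proof.
move=> S_AT /(AT_coef_valuation a_neq0 sqmod_a_le S_AT) [k0 v0] [k Sk0].
have e0_l2 : l2 (evec 0 : vec R) := (l2_evec 0).1.
have iter_val i : valuation (iter i S (evec 0)) (i * k0).
  elim: i => [|i IH]; first exact: valuation_evec.
  rewrite mulSn addnC /=; apply: (in_AT_valuation a_neq0 sqmod_a_le S_AT v0) => //.
  exact: (in_AT_iter_l2 S_AT (r := i) e0_l2).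
by have [_] := iter_val k.+1; rewrite Sk0 ?eqxx.
Qed.

End IntegralDomain.

Section Resolvent.
Variable R : realType.
Local Notation C := R[i].
Variable a : nat -> C.
Local Notation T := (wshift a).

Lemma wshift_resolvent_evec (lam : C) (y : vec R) n : lam != 0 ->
  (forall m, lam * y m - T y m = evec n m) ->
  forall k, y (n + k)%N = wprod a n k / lam ^+ k.+1.
Proof.
move=> lam0 hy.
have solve m : y m = (T y m + evec n m) / lam by rewrite -(hy m) addrC subrK mulrC mulKf.
have y_lt m : (m < n)%N -> y m = 0.
  elim: m => [|m IH] lt_mn; rewrite solve /evec ltn_eqF // addr0 /wshift.
    by rewrite mul0r.
  by rewrite IH ?mulr0 ?mul0r // ltnW.
have Ty_n : T y n = 0 by case: n {hy solve} y_lt => [|n] y_lt //; rewrite /wshift y_lt ?mulr0.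
elim=> [|k IH]; first by rewrite addn0 solve Ty_n /evec eqxx add0r wprod0 expr1 mul1r.
rewrite addnS solve /wshift IH /evec gtn_eqF ?ltnS ?leq_addr // addr0 wprodS.
have lamk : lam ^+ k != 0 by rewrite expf_neq0.
by rewrite !exprS; field; rewrite lam0 lamk.
Qed.

(* The coordinates of (mu - T)^-1 e_n are wprod n k / mu^(k+1), and its norm bounds them. *)
Lemma quasinilpotent_wprod_le : quasinilpotent T -> forall mu : R, 0 < mu ->
  exists K : R, 0 <= K /\ forall n i, sqmod (wprod a n i) <= K * (mu ^+ 2) ^+ i.+1.
Proof.
move=> qT mu mu_gt0; set lam : C := Complex mu 0.
have lam0 : lam != 0 by apply/eqP => -[] /eqP; rewrite gt_eqF.
have sqmod_lam : sqmod lam = mu ^+ 2 by rewrite /sqmod /= expr0n /= addr0.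
have [B [[B_l2 _ [K hK]] hB]] := qT lam lam0.
exists (`|K| ^+ 2); split => [|n i]; first exact: sqr_ge0.
have [e_l2 e_norm] := l2_evec (R := R) n.
have y_e m : lam * B (evec n) m - T (B (evec n)) m = evec n m.
  by have [_ /(congr1 (fun f => f m))] := hB _ e_l2.
have : sqmod (B (evec n) (n + i)%N) <= `|K| ^+ 2.
  apply: le_trans (sqmod_le_l2norm _ (B_l2 _ e_l2)) _.
  rewrite lerXn2r ?nnegrE ?l2norm_ge0 ?normr_ge0 //.
  apply: le_trans (hK _ e_l2) _; apply: le_trans (ler_wpM2r (l2norm_ge0 (evec n)) (ler_norm K)) _.
  by rewrite ler_piMr ?normr_ge0.
rewrite (wshift_resolvent_evec lam0 y_e) sqmodM sqmodV sqmodX sqmod_lam ler_pdivrMr //.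
by rewrite exprn_gt0 // exprn_gt0.
Qed.

End Resolvent.

Section PowerBound.
Variable R : realType.
Local Notation C := R[i].
Variable a : nat -> C.
Hypothesis a_neq0 : forall n, a n != 0.
Variable M : R.
Hypothesis sqmod_a_le : forall n, sqmod (a n) <= M.
Local Notation T := (wshift a).
Variable A : op R.
Hypothesis A_AT : in_AT T A.
Variables (p : {poly C}) (d : R).
Hypothesis d_ge0 : 0 <= d.
Hypothesis A_near_p : forall x, l2 x -> l2norm (vsub (A x) (poly_op T p x)) <= d * l2norm x.
Local Notation AT_poly := (AT_poly a A).
Implicit Types (x y : vec R).

Lemma iter_in_AT_wpoly r x m N : l2 x -> (m < N)%N ->
  iter r A x m = wpoly a (AT_poly N ^+ r) x m.
Proof.
move=> hx; elim: r m => [|r IH] m lt_mN; first by rewrite expr0 wpoly1.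
rewrite /= (in_AT_wpoly a_neq0 sqmod_a_le A_AT (in_AT_iter_l2 A_AT (r := r) hx) lt_mN).
rewrite exprS wpolyM; apply: wpoly_causal => j le_jm.
by apply: IH; exact: leq_ltn_trans le_jm lt_mN.
Qed.

Definition approx_err : op R := fun x => vsub (A x) (wpoly a p x).

Lemma l2_iter_approx_err i x : l2 x ->
  l2 (iter i approx_err x) /\ l2norm (iter i approx_err x) <= d ^+ i * l2norm x.
Proof.
move=> hx; elim: i => [|i [hl hn]]; first by rewrite expr0 mul1r.
rewrite /= {1 3}/approx_err; split.
  exact: l2_vsub (in_AT_l2 A_AT hl) (l2_wpoly sqmod_a_le p hl).1.
by rewrite wpolyE (le_trans (A_near_p hl)) // exprS -mulrA ler_wpM2l.
Qed.

Lemma iter_approx_err_wpoly i x m N : l2 x -> (m < N)%N ->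
  iter i approx_err x m = wpoly a ((AT_poly N - p) ^+ i) x m.
Proof.
move=> hx; elim: i m => [|i IH] m lt_mN; first by rewrite expr0 wpoly1.
have hl := (l2_iter_approx_err i hx).1.
rewrite /= {1}/approx_err /vsub (in_AT_wpoly a_neq0 sqmod_a_le A_AT hl lt_mN) exprS wpolyM wpolyB.
by congr (_ - _); apply: wpoly_causal => j le_jm; apply: IH; exact: leq_ltn_trans le_jm lt_mN.
Qed.

(* A = p(T) + E where both are power series in T, so the binomial theorem applies coordinatewise. *)
Lemma iter_in_AT_binomial r x m : l2 x -> iter r A x m =
  \sum_(i < r.+1) iter (r - i) (wpoly a p) (iter i approx_err x) m *+ 'C(r, i).
Proof.
move=> hx; rewrite (iter_in_AT_wpoly r hx (ltnSn m)).
rewrite -[AT_poly _](subrK p) addrC exprDn wpoly_sum; apply: eq_bigr => i _.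
rewrite wpolyMn wpolyM wpolyX; congr (_ *+ _).
apply: iter_wpoly_causal => j le_jm.
by rewrite (iter_approx_err_wpoly i hx (leq_ltn_trans le_jm (ltnSn m))).
Qed.

Variables (q : {poly C}) (K mu : R).
Hypothesis p_eq : p = 'X * q.
Hypotheses (K_ge0 : 0 <= K) (mu_ge0 : 0 <= mu).
Hypothesis wprod_le : forall n i, sqmod (wprod a n i) <= K * (mu ^+ 2) ^+ i.+1.

Lemma l2_iter_wpoly_decay j y : l2 y -> l2 (iter j (wpoly a p) y) /\
  l2norm (iter j (wpoly a p) y) <= Num.sqrt K * mu ^+ j.+1 * wpoly_bound M q ^+ j * l2norm y.
Proof.
move=> hy; rewrite -wpolyX p_eq exprMn wpolyXnM wpolyX.
have [hl hn] := l2_iter_wpoly sqmod_a_le q j hy.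
have V_ge0 : 0 <= K * (mu ^+ 2) ^+ j.+1 by rewrite mulr_ge0 // exprn_ge0 // sqr_ge0.
have [hl' hn'] := l2_iter_wshift hl V_ge0 (fun m => wprod_le m j); split => //.
apply: le_trans hn' _; rewrite sqrtrM // -exprM mulnC exprM sqrtr_sqr ger0_norm ?exprn_ge0 //.
by rewrite -[leRHS]mulrA; apply: ler_wpM2l; rewrite ?mulr_ge0 ?sqrtr_ge0 ?exprn_ge0.
Qed.

Lemma l2norm_iter_in_AT_le r x : l2 x ->
  l2norm (iter r A x) <= Num.sqrt K * mu * l2norm x * (mu * wpoly_bound M q + d) ^+ r.
Proof.
move=> hx; set F := fun i => iter (r - i) (wpoly a p) (iter i approx_err x).
have F_l2 i := (l2_iter_wpoly_decay (r - i) (l2_iter_approx_err i hx).1).1.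
have -> : iter r A x = vsum (fun i => vscale ('C(r, i))%:R (F i)) r.+1.
  apply: funext => m; rewrite iter_in_AT_binomial //.
  by apply: eq_bigr => i _; rewrite /vscale mulr_natl.
have [_ hn] := @l2_vsum _ (fun i => vscale ('C(r, i))%:R (F i)) r.+1
  (fun i _ => (l2_scale _ (F_l2 i)).1).
apply: le_trans hn _; rewrite exprDn mulr_sumr; apply: ler_sum => i _.
apply: le_trans (l2_scale _ (F_l2 i)).2 _; rewrite cabs_natr.
have Fi_le : l2norm (F i) <=
    Num.sqrt K * mu ^+ (r - i).+1 * wpoly_bound M q ^+ (r - i) * (d ^+ i * l2norm x).
  apply: le_trans (l2_iter_wpoly_decay (r - i) (l2_iter_approx_err i hx).1).2 _.
  rewrite ler_wpM2l ?(l2_iter_approx_err i hx).2 //.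
  by rewrite !mulr_ge0 ?sqrtr_ge0 ?exprn_ge0 ?wpoly_bound_ge0.
apply: le_trans (ler_wpM2l (ler0n _ _) Fi_le) _.
by rewrite le_eqVlt -mulr_natl exprMn exprS; apply/orP; left; apply/eqP; ring.
Qed.

End PowerBound.

Lemma polyXM_drop (F : comNzRingType) (p : {poly F}) : p`_0 = 0 -> p = 'X * drop_poly 1 p.
Proof. by move=> p0; apply/polyP => -[|i]; rewrite coefXM coef_drop_poly ?addn1. Qed.

Lemma sum_expr_le2 (F : realFieldType) (h : F) N : 0 <= h -> h <= 2^-1 ->
  \sum_(r < N) h ^+ r <= 2.
Proof.
move=> h_ge0 h_le; elim: N => [|N IH]; first by rewrite big_ord0.
rewrite big_ord_recl expr0 (_ : 2 = 1 + 2^-1 * 2); last by rewrite mulVf ?pnatr_eq0.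
rewrite lerD2l; under eq_bigr do rewrite exprS; rewrite -mulr_sumr.
by rewrite ler_pM // sumr_ge0 // => i _; rewrite exprn_ge0.
Qed.

Section NeumannSeries.
Variable R : realType.
Local Notation C := R[i].
Variable a : nat -> C.
Variable M : R.
Hypothesis sqmod_a_le : forall n, sqmod (a n) <= M.
Local Notation T := (wshift a).
Variable A : op R.
Hypothesis A_AT : in_AT T A.
Variable lam : C.
Hypothesis lam_neq0 : lam != 0.
Variables c rho : R.
Hypotheses (c_ge0 : 0 <= c) (rho_ge0 : 0 <= rho) (rho_le : 2 * rho <= cabs lam).
Hypothesis iter_le : forall r x, l2 x -> l2norm (iter r A x) <= c * l2norm x * rho ^+ r.
Implicit Types (x z : vec R).

(* (lam - A)^-1 = sum_r A^r / lam^(r+1); at coordinate m only r <= m contribute. *)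
Definition neumann : op R := fun z m => \sum_(r < m.+1) iter r A z m / lam ^+ r.+1.

Definition neumann_partial z N : vec R :=
  fun m => \sum_(r < N) (lam ^+ r.+1)^-1 * iter r A z m.

Lemma neumannE z m N : l2 z -> (m < N)%N -> neumann z m = neumann_partial z N m.
Proof.
move=> hz lt_mN; rewrite /neumann /neumann_partial.
rewrite (big_ord_widen N (fun r => iter r A z m / lam ^+ r.+1)) //.
rewrite big_mkcond; apply: eq_bigr => r _; rewrite mulrC; case: ltnP => // le_r.
by rewrite (in_AT_iter_lt sqmod_a_le A_AT hz) ?mulr0.
Qed.

Lemma l2_neumann_partial z N : l2 z -> l2 (neumann_partial z N) /\
  l2norm (neumann_partial z N) <= 2 * c / cabs lam * l2norm z.
Proof.
move=> hz; have lam_gt0 := cabs_gt0 lam_neq0.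
have hl r := (l2_scale (lam ^+ r.+1)^-1 (in_AT_iter_l2 A_AT (r := r) hz)).
have [hs hn] := @l2_vsum _ (fun r => vscale (lam ^+ r.+1)^-1 (iter r A z)) N (fun r _ => (hl r).1).
split; first exact: hs.
apply: le_trans hn _.
have term_le r : l2norm (vscale (lam ^+ r.+1)^-1 (iter r A z)) <=
    c * l2norm z / cabs lam * (rho / cabs lam) ^+ r.
  apply: le_trans (hl r).2 _; rewrite cabsV cabsX.
  apply: le_trans (ler_wpM2l _ (iter_le r hz)) _; first by rewrite invr_ge0 exprn_ge0 ?ltW.
  rewrite le_eqVlt exprS expr_div_n; apply/orP; left; apply/eqP; field.
  by rewrite expf_neq0 ?gt_eqF.
apply: (@le_trans _ _ (\sum_(r < N) c * l2norm z / cabs lam * (rho / cabs lam) ^+ r)).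
  by apply: ler_sum => r _; exact: term_le.
rewrite -mulr_sumr.
rewrite [leRHS](_ : _ = c * l2norm z / cabs lam * 2); last by field; rewrite gt_eqF.
apply: ler_wpM2l; first by rewrite !mulr_ge0 ?invr_ge0 ?cabs_ge0 ?l2norm_ge0.
apply: sum_expr_le2; first by rewrite divr_ge0 ?cabs_ge0.
by rewrite ler_pdivrMr // mulrC ler_pdivlMr // mulrC.
Qed.

Lemma l2_neumann z : l2 z -> l2 (neumann z) /\ l2norm (neumann z) <= 2 * c / cabs lam * l2norm z.
Proof.
move=> hz; apply: l2_sqsum_le; first by rewrite !mulr_ge0 ?invr_ge0 ?cabs_ge0 ?l2norm_ge0.
move=> N; have [hl hn] := l2_neumann_partial N hz.
have -> : sqsum (neumann z) N = sqsum (neumann_partial z N) N.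
  by apply: eq_bigr => m _; rewrite (neumannE hz (ltn_ord m)).
apply: le_trans (sqsum_le_l2norm N hl) _.
by rewrite lerXn2r ?nnegrE ?l2norm_ge0 // !mulr_ge0 ?invr_ge0 ?cabs_ge0 ?l2norm_ge0.
Qed.

Lemma iter_in_AT_linear r (b : C) x y : l2 x -> l2 y ->
  iter r A (fun n => b * x n + y n) = fun n => b * iter r A x n + iter r A y n.
Proof.
move=> hx hy; elim: r => [|r IH] //=.
rewrite IH (in_AT_linear A_AT) //.
- exact: (in_AT_iter_l2 A_AT (r := r) hx).
- exact: (in_AT_iter_l2 A_AT (r := r) hy).
Qed.

Lemma neumann_linear (b : C) x y : l2 x -> l2 y ->
  neumann (fun n => b * x n + y n) = fun n => b * neumann x n + neumann y n.
Proof.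
move=> hx hy; apply: funext => m; rewrite /neumann mulr_sumr -big_split.
by apply: eq_bigr => r _; rewrite iter_in_AT_linear // mulrDl mulrA.
Qed.

Lemma neumann_right z : l2 z -> forall m, lam * neumann z m - A (neumann z) m = z m.
Proof.
move=> hz m; have hN := (l2_neumann_partial m.+1 hz).1.
have -> : A (neumann z) m = A (neumann_partial z m.+1) m.
  apply: (in_AT_causal sqmod_a_le A_AT (l2_neumann hz).1 hN) => j lt_jm.
  by rewrite (neumannE hz (leqW lt_jm)).
rewrite /neumann_partial (@in_AT_sum _ _ _ sqmod_a_le _ A_AT (fun r => (lam ^+ r.+1)^-1)
  (fun r => iter r A z)); last by move=> r; exact: (in_AT_iter_l2 A_AT (r := r) hz).
rewrite (neumannE hz (ltnSn m)) /neumann_partial mulr_sumr -sumrB.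
have step r : lam * ((lam ^+ r.+1)^-1 * iter r A z m) - (lam ^+ r.+1)^-1 * A (iter r A z) m =
    - (iter r.+1 A z m / lam ^+ r.+1 - iter r A z m / lam ^+ r).
  by rewrite /= opprB exprS; field; rewrite lam_neq0 expf_neq0.
under eq_bigr do rewrite step.
rewrite sumrN.
rewrite -(big_mkord xpredT (fun r => iter r.+1 A z m / lam ^+ r.+1 - iter r A z m / lam ^+ r)).
rewrite telescope_sumr // (in_AT_iter_lt sqmod_a_le A_AT hz (ltnSn m)).
by rewrite mul0r sub0r opprK expr0 invr1 mulr1.
Qed.

Lemma neumann_left x : l2 x -> neumann (fun m => lam * x m - A x m) = x.
Proof.
move=> hx; set z : vec R := fun m => lam * x m - A x m.
have hz : l2 z := l2_vsub (l2_scale lam hx).1 (in_AT_l2 A_AT hx).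
have hy := (l2_neumann hz).1.
apply: funext; elim/ltn_ind => m IH.
have eA : A (neumann z) m = A x m.
  by apply: (in_AT_causal sqmod_a_le A_AT hy hx) => j lt_jm; exact: IH.
by have := neumann_right hz m; rewrite /z eA => /addIr /mulfI; apply.
Qed.

Lemma in_AT_resolvent_invertible : op_invertible (fun x n => lam * x n - A x n).
Proof.
exists neumann; split.
  split => [z hz|b x y hx hy|]; first exact: (l2_neumann hz).1.
    exact: neumann_linear.
  by exists (2 * c / cabs lam) => z hz; exact: (l2_neumann hz).2.
move=> x hx; split; first exact: neumann_left.
by apply: funext => m; exact: neumann_right.
Qed.

End NeumannSeries.

Lemma in_AT_quasinilpotent (R : realType) (a : nat -> R[i]) (M : R) :
  (forall n, a n != 0) -> (forall n, sqmod (a n) <= M) -> quasinilpotent (wshift a) ->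
  forall A, in_AT (wshift a) A -> quasinilpotent A.
Proof.
(* With d = |lam|/4 and mu = |lam|/(4 (|q| + 1)), the ratio mu |q| + d is at most |lam|/2. *)
move=> a_neq0 sqmod_a_le qT A A_AT lam lam_neq0.
set l := cabs lam; have l_gt0 : 0 < l := cabs_gt0 lam_neq0.
have d_gt0 : 0 < l / 4 by rewrite divr_gt0.
have [p [p0 A_near_p]] := A_AT.2 _ d_gt0.
have p_eq : p = 'X * drop_poly 1 p by apply: polyXM_drop; rewrite -horner_coef0.
set Kq := wpoly_bound M (drop_poly 1 p).
have Kq1_gt0 : 0 < 4 * (Kq + 1) by rewrite mulr_gt0 // ltr_pwDr // wpoly_bound_ge0.
set mu := l / (4 * (Kq + 1)).
have mu_gt0 : 0 < mu by rewrite divr_gt0.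
have [K [K_ge0 wprod_le]] := quasinilpotent_wprod_le qT mu_gt0.
have rho_le : 2 * (mu * Kq + l / 4) <= l.
  have mu_eq : mu * (4 * (Kq + 1)) = l by rewrite divfK // gt_eqF.
  have mu_ge0 := ltW mu_gt0; clearbody mu; nra.
apply: (in_AT_resolvent_invertible sqmod_a_le A_AT lam_neq0 (c := Num.sqrt K * mu) _ _ rho_le).
- by rewrite mulr_ge0 ?sqrtr_ge0 ?ltW.
- by rewrite addr_ge0 ?(ltW d_gt0) // mulr_ge0 ?(ltW mu_gt0) ?wpoly_bound_ge0.
- exact: (l2norm_iter_in_AT_le a_neq0 sqmod_a_le A_AT (ltW d_gt0) A_near_p p_eq K_ge0
    (ltW mu_gt0) wprod_le).
Qed.

Theorem mainTheorem14 (R : realType) (a : nat -> R[i])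
  (ha0 : forall n, a n != 0)
  (hab : exists M : R, forall n, sqmod (a n) <= M) :
  (forall S1 S2 : op R,
     in_AT (wshift a) S1 -> in_AT (wshift a) S2 ->
     ~ op_zero S1 -> ~ op_zero S2 -> ~ op_zero (op_mul S1 S2)) /\
  (quasinilpotent (wshift a) ->
     forall A : op R, in_AT (wshift a) A -> ~ op_zero A ->
       quasinilpotent A /\ ~ nilpotent A).
Proof.
have [M sqmod_a_le] := hab.
split=> [S1 S2|qT A A_AT A_neq0]; first exact: (in_AT_mul_neq0 ha0 sqmod_a_le).
split; first exact: (in_AT_quasinilpotent ha0 sqmod_a_le qT A_AT).
exact: (in_AT_not_nilpotent ha0 sqmod_a_le A_AT A_neq0).
Qed.
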